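(* Let $N\ge1$ and let $(A_N,H_N,D_N)$ be the fuzzy sphere spectral triple described in the context. Then the space of junk $2$-forms $$J^2=\Big\{\sum_j[D_N,a_j][D_N,b_j]\ :\ a_j,b_j\in A_N,\ \sum_ja_j[D_N,b_j]=0\Big\}\subseteq A_N\otimes_{\mathbb{C}}M_2(\mathbb{C})$$ is equal to the subspace $\{Y\otimes_{\mathbb{C}}1:Y\in A_N\}$.
   Context: Let $J_1,J_2,J_3$ be a basis of $su(2)$ with $[J_k,J_l]=\sum_m\epsilon_{klm}J_m$ ($\epsilon_{123}=1$, totally antisymmetric). For $n\ge0$, $\rho_{n/2}$ is the $(n+1)$-dimensional irreducible unitary representation of $su(2)$ (so $\rho_{n/2}(J_k)$ are skew-Hermitian). $K_N=\oplus_{n=0}^N\mathbb{C}^{n+1}$, $X_k=\oplus_{n=0}^N\rho_{n/2}(J_k)$, $A_N=B(K_N)$, $H_N=K_N\otimes\mathbb{C}^2$ with $A_N$ acting via $a\mapsto a\otimes1$; $\tau_k$ the Pauli matrices, $\sigma_k=\sqrt{-1}\tau_k$, $D_N=\sum_kX_k\otimes\sigma_k$; $B(H_N)$ is identified with $A_N\otimes_{\mathbb{C}}M_2(\mathbb{C})$. *)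

From HB Require Import structures.
From mathcomp Require Import all_boot all_order all_algebra.
From mathcomp.real_closed Require Import mxtens.
Set Implicit Arguments. Unset Strict Implicit. Unset Printing Implicit Defensive.
Import Order.TTheory GRing.Theory Num.Theory.
Local Open Scope ring_scope.

Section FuzzySphere.
Variable C : numClosedFieldType.

Definition adjmx {m n} (A : 'M[C]_(m, n)) : 'M[C]_(n, m) := (map_mx Num.conj A)^T.

Definition commx {n} (A B : 'M[C]_n) : 'M[C]_n := A *m B - B *m A.

(* Levi-Civita symbol on indices 0,1,2 (standing for 1,2,3), eps_{012} = 1 *)
Definition levi (k l m : 'I_3) : C :=
  let t := (nat_of_ord k, nat_of_ord l, nat_of_ord m) in
  if (t == (0,1,2)%N) || (t == (1,2,0)%N) || (t == (2,0,1)%N) then 1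
  else if (t == (0,2,1)%N) || (t == (2,1,0)%N) || (t == (1,0,2)%N) then -1
  else 0.

(* r : 'I_3 -> 'M_n is a representation of su(2) with
   [r k, r l] = sum_m eps_{klm} r m, by skew-Hermitian matrices,
   which is irreducible (no invariant subspace other than 0 and C^n;
   a column subspace W is r-invariant iff the row space of W^T is
   stable under the r k ^T). *)
Definition su2_irrep {n} (r : 'I_3 -> 'M[C]_n) : Prop :=
  [/\ forall k l, commx (r k) (r l) = \sum_(m < 3) levi k l m *: r m,
      forall k, adjmx (r k) = - r k
    & forall U : 'M[C]_n, (forall k, stablemx U (r k)^T) ->
        (U == 0) || row_full U].

(* Pauli matrices tau_k (k = 0,1,2 standing for 1,2,3) and sigma_k = i tau_k *)
Definition pauli (k : 'I_3) : 'M[C]_2 :=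
  \matrix_(i < 2, j < 2)
    if nat_of_ord k == 0%N then (if nat_of_ord i == nat_of_ord j then 0 else 1)
    else if nat_of_ord k == 1%N then
      (if nat_of_ord i == nat_of_ord j then 0
       else if nat_of_ord i == 0%N then - 'i else 'i)
    else (if nat_of_ord i == nat_of_ord j then
            (if nat_of_ord i == 0%N then 1 else -1) else 0).

Definition sigma (k : 'I_3) : 'M[C]_2 := 'i *: pauli k.

Definition fzdim (N : nat) : nat := \sum_(n < N.+1) n.+1.

(* X_k = direct sum over n = 0..N of rho_{n/2}(J_k) *)
Definition fzX (N : nat) (rho : forall n : 'I_N.+1, 'I_3 -> 'M[C]_n.+1)
  (k : 'I_3) : 'M[C]_(fzdim N) :=
  \mxdiag_(n < N.+1) rho n k.

Definition fzD (N : nat) (rho : forall n : 'I_N.+1, 'I_3 -> 'M[C]_n.+1)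
  : 'M[C]_(fzdim N * 2) :=
  \sum_(k < 3) tensmx (fzX rho k) (sigma k).

(* the representation a |-> a (x) 1 of A_N = B(K_N) on H_N *)
Definition fzrep {d} (a : 'M[C]_d) : 'M[C]_(d * 2) := tensmx a (1%:M : 'M[C]_2).

Definition junk2 {d} (D : 'M[C]_(d * 2)) (M : 'M[C]_(d * 2)) : Prop :=
  exists (m : nat) (a b : 'I_m -> 'M[C]_d),
    \sum_(j < m) fzrep (a j) *m commx D (fzrep (b j)) = 0 /\
    M = \sum_(j < m) commx D (fzrep (a j)) *m commx D (fzrep (b j)).

End FuzzySphere.

From HB Require Import structures.
From mathcomp Require Import all_boot all_order all_algebra.
From mathcomp.real_closed Require Import mxtens.
From mathcomp Require Import ring.
Set Implicit Arguments.
Unset Strict Implicit.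
Unset Printing Implicit Defensive.

Import Order.TTheory GRing.Theory Num.Theory.
Local Open Scope ring_scope.

(** Write Cas = Σ_k X_k² for the Casimir. The su(2) relations together with
    σ_k σ_l = -δ_kl - Σ_m ε_klm σ_m give D² = -(Cas ⊗ 1) - D. Since
    [D,a] ω = {D, a ω} - a {D, ω} and {D, [D,b]} = [D², b], a junk form
    Σ_j [D,a_j] [D,b_j] with Σ_j a_j [D,b_j] = 0 equals -Σ_j a_j [D²,b_j],
    that is (Σ_j a_j [Cas,b_j]) ⊗ 1.
    Conversely, junk forms are closed under sums and under multiplication by
    A_N ⊗ 1 on both sides, so, as M_d(C) is simple, it suffices to exhibit one
    nonzero junk form Y ⊗ 1. With P0 the projection onto the spin-0 summand
    (where all X_k vanish), the pairs (E_jq, E_qj P0) satisfy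
    Σ a [M,b] = tr(M) P0 whenever P0 M = 0: the X_k are traceless, while
    tr Cas ≠ 0 because the X_k are skew-Hermitian and the spin-1/2 summand
    (present as N ≥ 1) is nonzero. *)

Lemma tensmx_is_bilinear (R : comNzRingType) m n p q : bilinear_for
  (GRing.Scale.Law.clone _ _ *:%R _) (GRing.Scale.Law.clone _ _ *:%R _)
  (@tensmx R m n p q).
Proof.
split=> [B|A] a x y; apply/matrixP => i j; rewrite !mxE.
- by rewrite mulrDl mulrA.
- by rewrite mulrDr mulrCA.
Qed.

HB.instance Definition _ (R : comNzRingType) m n p q :=
  bilinear_isBilinear.Build R 'M[R]_(m, n) 'M[R]_(p, q) 'M[R]_(m * p, n * q)
    _ _ (@tensmx R m n p q) (tensmx_is_bilinear R m n p q).

Section BlockDiagonal.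
Variables (R : pzRingType) (p : nat) (p_ : 'I_p -> nat).

Lemma mul_mxdiag (A B : forall i, 'M[R]_(p_ i)) :
  \mxdiag_i A i *m \mxdiag_i B i = \mxdiag_i (A i *m B i).
Proof.
rewrite {2}/mxdiag mul_mxdiag_mxblock /mxdiag; apply/eq_mxblock => i j.
by case: eqVneq => [<-|_]; rewrite ?conform_mx_id ?mulmx0.
Qed.

Lemma scale_mxdiag c (A : forall i, 'M[R]_(p_ i)) :
  \mxdiag_i (c *: A i) = c *: \mxdiag_i A i.
Proof.
rewrite -mul_scalar_mx -(mxdiagZ (p_ := p_)) mul_mxdiag.
by apply/eq_mxdiag => i; rewrite mul_scalar_mx.
Qed.

End BlockDiagonal.

Lemma delta_mulmx_delta (R : pzRingType) n (i a b j : 'I_n) (M : 'M[R]_n) :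
  delta_mx i a *m M *m delta_mx b j = M a b *: delta_mx i j.
Proof.
apply/matrixP => k l; rewrite !mxE (bigD1 b) //= big1 ?addr0; last first.
  by move=> t /negbTE tb; rewrite !mxE tb /= mulr0.
rewrite !mxE (bigD1 a) //= big1 ?addr0; last first.
  by move=> t /negbTE ta; rewrite !mxE ta andbF mul0r.
rewrite !mxE !eqxx /= !andbT.
by case: (k == i); case: (l == j); rewrite /= ?mulr1 ?mulr0 ?mul1r ?mul0r.
Qed.

Lemma mx_ideal_full (F : fieldType) n (S : 'M[F]_n -> Prop) (A : 'M[F]_n) :
  A != 0 -> S A -> (forall B B', S B -> S B' -> S (B + B')) ->
  (forall L B R, S B -> S (L *m B *m R)) -> forall Y, S Y.
Proof.
move=> nzA SA SD SM Y.
have /existsP[[a b] /= Aab] : [exists ab : 'I_n * 'I_n, A ab.1 ab.2 != 0].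
  apply: contraR nzA => /existsPn zA; apply/eqP/matrixP => a b.
  by rewrite mxE; apply/eqP/negbNE/(zA (a, b)).
have S0 : S 0 by move: (SM 0 A 0 SA); rewrite mulmx0.
have Ssum (I : finType) (G : I -> 'M_n) : (forall i, S (G i)) -> S (\sum_i G i).
  by move=> SG; apply: big_ind.
rewrite [Y]matrix_sum_delta; apply: (Ssum) => i; apply: (Ssum) => j.
have -> : Y i j *: delta_mx i j = (Y i j / A a b) *: delta_mx i a *m A *m delta_mx b j.
  by rewrite -!scalemxAl delta_mulmx_delta scalerA divfK.
exact: SM.
Qed.

Definition ord3_0 : 'I_3 := @Ordinal 3 0 isT.
Definition ord3_1 : 'I_3 := @Ordinal 3 1 isT.
Definition ord3_2 : 'I_3 := @Ordinal 3 2 isT.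

Lemma ord3_ind (P : 'I_3 -> Prop) : P ord3_0 -> P ord3_1 -> P ord3_2 -> forall k, P k.
Proof.
move=> P0 P1 P2 [[|[|[|//]]] lt_k3].
- by rewrite (_ : Ordinal lt_k3 = ord3_0) //; apply/val_inj.
- by rewrite (_ : Ordinal lt_k3 = ord3_1) //; apply/val_inj.
- by rewrite (_ : Ordinal lt_k3 = ord3_2) //; apply/val_inj.
Qed.

Lemma big_ord3 (V : nmodType) (f : 'I_3 -> V) :
  \sum_(m < 3) f m = f ord3_0 + f ord3_1 + f ord3_2.
Proof.
rewrite !big_ord_recr big_ord0 /= add0r.
by congr (f _ + f _ + f _); apply/val_inj.
Qed.

Section Commutators.
Variable C : numClosedFieldType.

Lemma commx_is_bilinear n : bilinear_for
  (GRing.Scale.Law.clone _ _ *:%R _) (GRing.Scale.Law.clone _ _ *:%R _)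
  (@commx C n).
Proof.
by split=> [B|A] a x y /=;
  rewrite /commx mulmxDl mulmxDr -scalemxAl -scalemxAr opprD addrACA scalerBr.
Qed.

HB.instance Definition _ n :=
  bilinear_isBilinear.Build C 'M[C]_n 'M[C]_n 'M[C]_n _ _ (@commx C n)
    (commx_is_bilinear n).

Lemma commxM n (D A B : 'M[C]_n) :
  commx D (A *m B) = commx D A *m B + A *m commx D B.
Proof.
by rewrite /commx mulmxBl mulmxBr !mulmxA addrA subrK.
Qed.

Lemma mxtrace_commx n (A B : 'M[C]_n) : \tr (commx A B) = 0.
Proof. by rewrite /commx linearB /= mxtrace_mulC subrr. Qed.

Lemma commx_mulmx n (D A W : 'M[C]_n) :
  commx D A *m W = D *m (A *m W) + A *m W *m D - A *m (D *m W + W *m D).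
Proof. by rewrite /commx mulmxBl mulmxDr !mulmxA opprD addrA addrAC addrK. Qed.

Lemma anticommx_commx n (D B : 'M[C]_n) :
  D *m commx D B + commx D B *m D = commx (D *m D) B.
Proof. by rewrite /commx mulmxBr mulmxBl !mulmxA addrA subrK. Qed.

Lemma sum_commx_mulmx_commx n (D K : 'M[C]_n) (I : finType)
    (a b : I -> 'M[C]_n) :
  D *m D = - K - D -> \sum_i a i *m commx D (b i) = 0 ->
  \sum_i commx D (a i) *m commx D (b i) = \sum_i a i *m commx K (b i).
Proof.
move=> DD cond.
transitivity (D *m (\sum_i a i *m commx D (b i))
    + (\sum_i a i *m commx D (b i)) *m D
    - \sum_i a i *m commx (D *m D) (b i)).
  rewrite mulmx_sumr mulmx_suml -big_split -sumrB /=; apply: eq_bigr => i _.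
  by rewrite commx_mulmx anticommx_commx mulmxA.
rewrite cond mulmx0 mul0mx addr0 sub0r DD.
under eq_bigr do rewrite linearBl linearNl /= mulmxBr mulmxN.
by rewrite sumrB sumrN cond subr0 opprK.
Qed.

Lemma sum_delta_commx n (M P : 'M[C]_n) : P *m M = 0 ->
  \sum_(jq : 'I_n * 'I_n) delta_mx jq.1 jq.2 *m commx M (delta_mx jq.2 jq.1 *m P)
    = \tr M *: P.
Proof.
move=> PM.
rewrite -(pair_bigA _ (fun j q => delta_mx j q *m commx M (delta_mx q j *m P))).
transitivity (\sum_j \tr M *: (delta_mx j j *m P)).
  apply: eq_bigr => j _; rewrite /mxtrace scaler_suml; apply: eq_bigr => q _.
  rewrite /commx -(mulmxA _ P M) PM mulmx0 subr0 !mulmxA.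
  by rewrite delta_mulmx_delta scalemxAl.
have sum_delta1 : \sum_j delta_mx j j = 1%:M :> 'M[C]_n.
  by rewrite (scalar_mx_sum_delta n 1); under [RHS]eq_bigr do rewrite scale1r.
by rewrite -scaler_sumr -mulmx_suml sum_delta1 mul1mx.
Qed.

End Commutators.

Section Su2.
Variable C : numClosedFieldType.

Lemma sigma_mul k l : sigma C k *m sigma C l =
  - (k == l)%:R%:M - \sum_(m < 3) levi C k l m *: sigma C m.
Proof.
have ii : ('i : C) * 'i = -1 by rewrite -expr2 sqrCi.
elim/ord3_ind: k; elim/ord3_ind: l; rewrite big_ord3 /levi /=;
apply/matrixP => i j; rewrite !mxE !big_ord_recr big_ord0 /= !mxE;
case: i => [[|[|//]] ?]; case: j => [[|[|//]] ?]; rewrite /= ?mxE /=; ring: ii.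
Qed.

Definition su2_relations {n} (X : 'I_3 -> 'M[C]_n) : Prop :=
  forall k l, commx (X k) (X l) = \sum_(m < 3) levi C k l m *: X m.

Section Su2Relations.
Variables (n : nat) (X : 'I_3 -> 'M[C]_n).
Hypothesis su2X : su2_relations X.

Lemma su2_commx_cyclic :
  [/\ X ord3_0 = commx (X ord3_1) (X ord3_2),
      X ord3_1 = commx (X ord3_2) (X ord3_0)
    & X ord3_2 = commx (X ord3_0) (X ord3_1)].
Proof. by rewrite !su2X !big_ord3 /levi /= !scale1r !scale0r ?addr0 ?add0r. Qed.

Lemma su2_mxtrace k : \tr (X k) = 0.
Proof.
case: su2_commx_cyclic => X0 X1 X2.
by elim/ord3_ind: k; [rewrite X0 | rewrite X1 | rewrite X2]; apply: mxtrace_commx.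
Qed.

Lemma su2_levi_sum m : \sum_k \sum_l levi C k l m *: (X k *m X l) = X m.
Proof.
case: su2_commx_cyclic => X0 X1 X2.
elim/ord3_ind: m; rewrite !big_ord3 /levi /= !scale0r ?scale1r ?scaleN1r !add0r ?addr0.
- by rewrite [RHS]X0.
- by rewrite [RHS]X1 addrC.
- by rewrite [RHS]X2.
Qed.

End Su2Relations.

Lemma su2_relations_dim1 (X : 'I_3 -> 'M[C]_1) k : su2_relations X -> X k = 0.
Proof.
have commx1 (A B : 'M[C]_1) : commx A B = 0.
  by rewrite /commx [A]mx11_scalar [B]mx11_scalar -!scalar_mxM mulrC subrr.
move=> /su2_commx_cyclic[X0 X1 X2].
by elim/ord3_ind: k; [rewrite X0 | rewrite X1 | rewrite X2]; apply: commx1.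
Qed.

Lemma su2_irrep_relations n (r : 'I_3 -> 'M[C]_n) : su2_irrep r -> su2_relations r.
Proof. by case. Qed.

Lemma su2_irrep_neq0 n (r : 'I_3 -> 'M[C]_n.+2) : su2_irrep r -> exists k, r k != 0.
Proof.
case=> _ _ irr; have [k nz_rk | r0] := pickP (fun k => r k != 0); first by exists k.
have stable k : stablemx (delta_mx 0 0 : 'M[C]_n.+2) (r k)^T.
  by move/negbFE/eqP: (r0 k) => ->; rewrite trmx0 mulmx0 sub0mx.
case/orP: (irr _ stable) => [/eqP/matrixP/(_ 0 0)/eqP|]; last first.
  by rewrite /row_full mxrank_delta.
by rewrite !mxE oner_eq0.
Qed.

Lemma mxtrace_mul_adjmx n (A : 'M[C]_n) :
  \tr (A *m adjmx A) = \sum_i \sum_j `|A i j| ^+ 2.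
Proof.
rewrite /mxtrace; apply: eq_bigr => i _; rewrite mxE; apply: eq_bigr => j _.
by rewrite !mxE normCK.
Qed.

Lemma mxtrace_mul_adjmx_ge0 n (A : 'M[C]_n) : 0 <= \tr (A *m adjmx A).
Proof. by rewrite mxtrace_mul_adjmx; do 2!apply: sumr_ge0 => ? _; rewrite exprn_ge0. Qed.

Lemma mxtrace_mul_adjmx_eq0 n (A : 'M[C]_n) : (\tr (A *m adjmx A) == 0) = (A == 0).
Proof.
apply/eqP/eqP => [|->]; last by rewrite mul0mx linear0.
have sqr_ge0 (x : C) : 0 <= `|x| ^+ 2 by rewrite exprn_ge0.
rewrite mxtrace_mul_adjmx => A0; apply/matrixP => i j.
have Ai0 := psumr_eq0P (fun i _ => sumr_ge0 _ (fun j _ => sqr_ge0 _)) A0 (i := i) isT.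
have /eqP := psumr_eq0P (fun j _ => sqr_ge0 _) Ai0 (i := j) isT.
by rewrite sqrf_eq0 normr_eq0 mxE => /eqP.
Qed.

Definition casimir {n} (X : 'I_3 -> 'M[C]_n) : 'M[C]_n := \sum_k X k *m X k.

Lemma mxtrace_casimir n (X : 'I_3 -> 'M[C]_n) : (forall k, adjmx (X k) = - X k) ->
  \tr (casimir X) = - \sum_k \tr (X k *m adjmx (X k)).
Proof.
move=> skewX; rewrite /casimir linear_sum -sumrN; apply: eq_bigr => k _.
by rewrite skewX mulmxN linearN opprK.
Qed.

End Su2.

Section TensorRepresentation.
Variable C : numClosedFieldType.

Lemma fzrep_is_linear d : linear (@fzrep C d).
Proof. by move=> c A B; rewrite /fzrep linearPl. Qed.

HB.instance Definition _ d :=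
  GRing.isLinear.Build C 'M[C]_d 'M[C]_(d * 2) _ (@fzrep C d) (@fzrep_is_linear d).

Lemma fzrepM d (A B : 'M[C]_d) : fzrep A *m fzrep B = fzrep (A *m B).
Proof. by rewrite /fzrep tensmx_mul mulmx1. Qed.

Lemma commx_fzrep d (A B : 'M[C]_d) : commx (fzrep A) (fzrep B) = fzrep (commx A B).
Proof. by rewrite /commx !fzrepM linearB. Qed.

Section Dirac.
Variables (d : nat) (X : 'I_3 -> 'M[C]_d).
Local Notation dirac := (\sum_(k < 3) X k *t sigma C k).

Lemma commx_dirac_fzrep B :
  commx dirac (fzrep B) = \sum_(k < 3) commx (X k) B *t sigma C k.
Proof.
rewrite /commx /fzrep mulmx_suml mulmx_sumr -sumrB; apply: eq_bigr => k _.
by rewrite !tensmx_mul mulmx1 mul1mx linearBl.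
Qed.

Hypothesis su2X : su2_relations X.

Lemma dirac_sqr : dirac *m dirac = - fzrep (casimir X) - dirac.
Proof.
rewrite mulmx_suml.
transitivity (\sum_k \sum_l (X k *m X l) *t
    (- (k == l)%:R%:M - \sum_(m < 3) levi C k l m *: sigma C m)).
  apply: eq_bigr => k _; rewrite mulmx_sumr; apply: eq_bigr => l _.
  by rewrite tensmx_mul sigma_mul.
under eq_bigr do under eq_bigr do
  rewrite linearBr linearNr linear_sumr -scalemx1 linearZr_LR /=.
under eq_bigr do rewrite sumrB; rewrite sumrB; congr (_ - _).
  rewrite /casimir /fzrep linear_sumlz -sumrN; apply: eq_bigr => k _.
  rewrite sumrN (bigD1 k) //= eqxx scale1r big1 ?addr0 // => l.
  by rewrite eq_sym => /negbTE ->; rewrite scale0r.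
under eq_bigr do rewrite exchange_big; rewrite exchange_big /=.
apply: eq_bigr => m _; rewrite -[in RHS](su2_levi_sum su2X) linear_sumlz.
apply: eq_bigr => k _; rewrite linear_sumlz; apply: eq_bigr => l _.
by rewrite linearZl_LR linearZr_LR.
Qed.

End Dirac.

Section JunkForms.
Variables (d : nat) (D : 'M[C]_(d * 2)).

Lemma junk2_fin (I : finType) (a b : I -> 'M[C]_d) :
  \sum_i fzrep (a i) *m commx D (fzrep (b i)) = 0 ->
  junk2 D (\sum_i commx D (fzrep (a i)) *m commx D (fzrep (b i))).
Proof.
move=> cond; exists #|I|, (fun j => a (enum_val j)), (fun j => b (enum_val j)).
by rewrite -(big_enum_val (fun i => fzrep (a i) *m commx D (fzrep (b i))))
  -(big_enum_val (fun i => commx D (fzrep (a i)) *m commx D (fzrep (b i)))).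
Qed.

Lemma junk2_add M M' : junk2 D M -> junk2 D M' -> junk2 D (M + M').
Proof.
case=> [m [a [b [cond ->]]]] [m' [a' [b' [cond' ->]]]].
pose ab i := match i with inl j => (a j, b j) | inr j => (a' j, b' j) end.
have := @junk2_fin ('I_m + 'I_m')%type (fun i => (ab i).1) (fun i => (ab i).2).
by rewrite !big_sumType /= cond cond' addr0; apply.
Qed.

Lemma junk2_mull L M : junk2 D M -> junk2 D (fzrep L *m M).
Proof.
case=> m [a [b [cond ->]]].
have condL : \sum_j fzrep (L *m a j) *m commx D (fzrep (b j)) = 0.
  by under eq_bigr do rewrite -fzrepM -mulmxA; rewrite -mulmx_sumr cond mulmx0.
rewrite (_ : fzrep L *m _ = \sum_j commx D (fzrep (L *m a j)) *m commx D (fzrep (b j))).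
  exact: junk2_fin.
under [RHS]eq_bigr do rewrite -fzrepM commxM mulmxDl -!mulmxA.
by rewrite big_split /= -!mulmx_sumr cond mulmx0 add0r.
Qed.

Lemma junk2_mulr R M : junk2 D M -> junk2 D (M *m fzrep R).
Proof.
case=> m [a [b [cond ->]]].
set c := \sum_j a j *m b j.
have commx_c : \sum_j commx D (fzrep (a j)) *m fzrep (b j) = commx D (fzrep c).
  rewrite /c linear_sum linear_sumr /=; under [RHS]eq_bigr do rewrite -fzrepM commxM.
  by rewrite big_split /= cond addr0.
have fzrep_c : \sum_j fzrep (a j) *m fzrep (b j) = fzrep c.
  by rewrite /c linear_sum; apply: eq_bigr => j _; rewrite fzrepM.
(* The extra pair (-c, R) cancels the term (Σ_j a_j b_j) [D,R] that the
   pairs (a_j, b_j R) add to the constraint. *)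
pose ab (i : 'I_m + 'I_1) :=
  match i with inl j => (a j, b j *m R) | inr _ => (- c, R) end.
have := @junk2_fin ('I_m + 'I_1)%type (fun i => (ab i).1) (fun i => (ab i).2).
rewrite !big_sumType !big_ord1 /=.
under eq_bigr do rewrite -fzrepM commxM mulmxDr !mulmxA.
rewrite big_split /= -!mulmx_suml cond mul0mx add0r.
rewrite fzrep_c linearN mulNmx subrr => /(_ erefl).
under eq_bigr do rewrite -fzrepM commxM mulmxDr !mulmxA.
by rewrite big_split /= -!mulmx_suml commx_c linearNr mulNmx addrK.
Qed.

Lemma junk2_mulmx L R M : junk2 D M -> junk2 D (fzrep L *m M *m fzrep R).
Proof. by move=> /(junk2_mull L)/(junk2_mulr R). Qed.

Lemma sum_commx_mulmx_commx_fzrep K (I : finType) (a b : I -> 'M[C]_d) :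
  D *m D = - fzrep K - D -> \sum_i fzrep (a i) *m commx D (fzrep (b i)) = 0 ->
  \sum_i commx D (fzrep (a i)) *m commx D (fzrep (b i))
    = fzrep (\sum_i a i *m commx K (b i)).
Proof.
move=> DD cond; rewrite (sum_commx_mulmx_commx DD cond) linear_sum.
by apply: eq_bigr => i _; rewrite commx_fzrep fzrepM.
Qed.

End JunkForms.

End TensorRepresentation.

Section FuzzySphere.
Variables (C : numClosedFieldType) (N : nat).
Variable rho : forall n : 'I_N.+1, 'I_3 -> 'M[C]_n.+1.
Hypothesis rho_irrep : forall n, su2_irrep (rho n).

Local Notation X := (fzX rho).
Local Notation D := (fzD rho).

Lemma fzX_su2 : su2_relations X.
Proof.
move=> k l; rewrite /commx /fzX !mul_mxdiag -mxdiagB.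
under eq_mxdiag do rewrite -/(commx _ _) (su2_irrep_relations (rho_irrep _)).
by rewrite mxdiag_sum; apply: eq_bigr => m _; rewrite scale_mxdiag.
Qed.

Lemma fzD_sqr : D *m D = - fzrep (casimir X) - D.
Proof. exact: dirac_sqr fzX_su2. Qed.

Lemma fzX_casimir : casimir X = \mxdiag_n casimir (rho n).
Proof.
by rewrite /casimir /fzX mxdiag_sum; apply: eq_bigr => k _; rewrite mul_mxdiag.
Qed.

Lemma mxtrace_fzX_casimir_neq0 : (1 <= N)%N -> \tr (casimir X) != 0.
Proof.
move=> N_ge1; pose n1 : 'I_N.+1 := Ordinal (N_ge1 : 1 < N.+1)%N.
have [k rk_neq0] := su2_irrep_neq0 (rho_irrep n1).
have skew n k' : adjmx (rho n k') = - rho n k' by case: (rho_irrep n).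
have ge0 n : 0 <= \sum_k' \tr (rho n k' *m adjmx (rho n k')).
  by apply: sumr_ge0 => k' _; apply: mxtrace_mul_adjmx_ge0.
rewrite fzX_casimir mxtrace_mxdiag.
under eq_bigr do rewrite mxtrace_casimir //.
rewrite sumrN oppr_eq0; apply/eqP => tr0.
have tr_n1 := psumr_eq0P (fun n _ => ge0 n) tr0 (i := n1) isT.
have /eqP := psumr_eq0P (fun k' _ => mxtrace_mul_adjmx_ge0 _) tr_n1 (i := k) isT.
by rewrite mxtrace_mul_adjmx_eq0 (negbTE rk_neq0).
Qed.

Definition fz_proj0 : 'M[C]_(fzdim N) :=
  \mxdiag_(n < N.+1) (if n == ord0 then 1%:M else 0 : 'M[C]_n.+1).

Lemma fz_proj0_mulX k : fz_proj0 *m X k = 0.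
Proof.
rewrite /fz_proj0 /fzX mul_mxdiag -(mxdiag0 (p_ := fun n : 'I_N.+1 => n.+1)).
apply: eq_mxdiag => n; case: eqVneq => [->|_]; last by rewrite mul0mx.
by rewrite (su2_relations_dim1 k (su2_irrep_relations (rho_irrep ord0))) mulmx0.
Qed.

Lemma fz_proj0_neq0 : fz_proj0 != 0.
Proof.
have tr_proj0 : \tr fz_proj0 = 1.
  rewrite mxtrace_mxdiag (bigD1 ord0) //= mxtrace1 big1 ?addr0 // => n.
  by move=> /negbTE ->; apply: mxtrace0.
by apply: contra_eq_neq tr_proj0 => ->; rewrite mxtrace0 eq_sym oner_eq0.
Qed.

Lemma junk2_fz_proj0 : junk2 D (fzrep (\tr (casimir X) *: fz_proj0)).
Proof.
pose a (jq : 'I_(fzdim N) * 'I_(fzdim N)) := delta_mx jq.1 jq.2 : 'M[C]_(fzdim N).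
pose b (jq : 'I_(fzdim N) * 'I_(fzdim N)) := delta_mx jq.2 jq.1 *m fz_proj0.
have proj0_casimir : fz_proj0 *m casimir X = 0.
  by rewrite /casimir mulmx_sumr big1 // => k _; rewrite mulmxA fz_proj0_mulX mul0mx.
have cond : \sum_jq fzrep (a jq) *m commx D (fzrep (b jq)) = 0.
  under eq_bigr do rewrite commx_dirac_fzrep mulmx_sumr.
  rewrite exchange_big big1 // => k _.
  transitivity ((\sum_jq a jq *m commx (X k) (b jq)) *t sigma C k).
    by rewrite linear_sumlz; apply: eq_bigr => jq _; rewrite /fzrep tensmx_mul mul1mx.
  by rewrite sum_delta_commx ?fz_proj0_mulX // (su2_mxtrace fzX_su2) scale0r linear0l.
have := junk2_fin cond.
by rewrite (sum_commx_mulmx_commx_fzrep fzD_sqr cond) sum_delta_commx.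
Qed.

End FuzzySphere.

Theorem proposition8p3 (C : numClosedFieldType) (N : nat)
  (rho : forall n : 'I_N.+1, 'I_3 -> 'M[C]_n.+1) :
  (1 <= N)%N ->
  (forall n : 'I_N.+1, su2_irrep (rho n)) ->
  forall M : 'M[C]_(fzdim N * 2),
    junk2 (fzD rho) M <-> exists Y : 'M[C]_(fzdim N), M = fzrep Y.
Proof.
move=> N_ge1 rho_irrep M; split.
  case=> m [a [b [cond ->]]].
  by eexists; apply: sum_commx_mulmx_commx_fzrep (fzD_sqr rho_irrep) cond.
case=> Y ->; move: Y.
apply: (mx_ideal_full (S := fun Y => junk2 _ (fzrep Y)) _ (junk2_fz_proj0 rho_irrep)).
- by rewrite scaler_eq0 negb_or mxtrace_fzX_casimir_neq0 // fz_proj0_neq0.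
- by move=> A B junkA junkB; rewrite linearD; apply: junk2_add.
- by move=> L A R junkA; rewrite -!fzrepM; apply: junk2_mulmx.
Qed.
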